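(* Let $q\ge 3$ and $k\ge 2$ be integers. Then $$SO(S_{q,1,k})=(2qk-2k-4)\sqrt{2}+4k\sqrt{5}.$$
   Context: For a finite simple graph $G$, $SO(G)=\sum_{uv\in E(G)}\sqrt{d_u^2+d_v^2}$, where $d_u$ is the degree of $u$ in $G$ (the Sombor index). The spiro-chain $S_{q,1,k}$ is the chain of $k$ disjoint copies $G_1,\ldots,G_k$ of the cycle $C_q$ with respect to adjacent vertices $x_i,y_i\in V(G_i)$; i.e. it is obtained from the disjoint union of the $k$ cycles by identifying $y_i$ with $x_{i+1}$ for $i=1,\ldots,k-1$. *)

From HB Require Import structures.
From mathcomp Require Import all_boot all_order all_algebra.
Set Implicit Arguments. Unset Strict Implicit. Unset Printing Implicit Defensive.
Import Order.TTheory GRing.Theory Num.Theory.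

(* Graphs on vertex set 'I_n given by a (symmetric, irreflexive) boolean
   adjacency relation. *)

Definition deg (n : nat) (e : rel 'I_n) (u : 'I_n) : nat := #|[set v | e u v]|.

(* Sombor index: sum over edges uv (each unordered edge counted once, via u < v)
   of sqrt(d_u^2 + d_v^2). *)
Definition sombor (R : rcfType) (n : nat) (e : rel 'I_n) : R :=
  \sum_(u < n) \sum_(v < n | (u < v)%N && e u v)
     Num.sqrt (((deg e u)%:R : R) ^+ 2 + ((deg e v)%:R : R) ^+ 2).

Definition cyc_adj (q : nat) (a b : 'I_q) : bool :=
  (val b == (val a).+1 %% q) || (val a == (val b).+1 %% q).

(* Spiro-chain S_{q,1,k}: copy G_i (i < k) of C_q has vertices 0..q-1, with
   x_i = vertex 0 and y_i = vertex q-1 (adjacent in C_q).  Vertex j of copy i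
   is sent to the global vertex i*(q-1)+j, which identifies y_i with x_{i+1}. *)
Definition spiro_n (q k : nat) : nat := k * (q - 1) + 1.

Definition spiro_adj (q k : nat) : rel 'I_(spiro_n q k) :=
  fun u v => [exists i : 'I_k, exists j1 : 'I_q, exists j2 : 'I_q,
    [&& cyc_adj j1 j2, val u == i * (q - 1) + j1 & val v == i * (q - 1) + j2]].

Arguments spiro_adj q k : clear implicits.
Arguments sombor R [n] e.

From HB Require Import structures.
From mathcomp Require Import all_boot all_order all_algebra zify ring.
Import Order.TTheory GRing.Theory Num.Theory.

(** Copy i of C_q occupies the vertices i*p, ..., i*p + p (p = q - 1) of
    0, ..., k*p; its edges are the path edges a -- a + 1 and the closing edge
    i*p -- i*p + p.  Only the k - 1 cut vertices i*p (0 < i < k) have degree 4,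
    all others have degree 2.  Summing copy by copy, copy i contributes p - 2
    path edges of weight sqrt 8, the two path edges at its ends i*p and
    i*p + p, and its closing edge; the copies differ only in whether their
    ends are cut vertices, and the only ends that are not are 0 and k*p. *)

(* The arc a -> b when every cycle is oriented i*p -> i*p + 1 -> ... ->
   i*p + p -> i*p. *)
Definition chain_step (p a b : nat) : bool :=
  (b == a.+1) || (p %| b) && (a == b + p).

Definition chain_adj (p a b : nat) : bool := chain_step p a b || chain_step p b a.

Definition spiro_deg (p k a : nat) : nat :=
  if (p %| a) && (0 < a < k * p) then 4 else 2.

Lemma ndvdn_between_multiples n i a :
  0 < n -> i * n < a < i * n + n -> ~~ (n %| a).
Proof.
move=> n_gt0 /andP[lt_ia lt_ai]; apply/dvdnP=> -[j aE].
by move: lt_ia lt_ai; rewrite aE -mulSnr !ltn_pmul2r //; lia.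
Qed.

Lemma sum_nat_and_eq n x (c : bool) :
  \sum_(v < n) (c && (v == x :> nat)) = c && (x < n).
Proof.
rewrite (eq_bigr (fun v : 'I_n => if v == x :> nat then c : nat else 0)).
  rewrite -big_mkcond (big_ord1_eq _ (fun=> nat_of_bool c)).
  by case: c; case: (x < n).
by move=> v _; case: c; case: (_ == _).
Qed.

Section SomborWeight.

Variable R : rcfType.
Local Open Scope ring_scope.

Definition sombor_weight (x y : nat) : R :=
  Num.sqrt (x%:R ^+ 2 + y%:R ^+ 2).

Lemma sombor_weightC x y : sombor_weight x y = sombor_weight y x.
Proof. by rewrite /sombor_weight addrC. Qed.

Lemma sombor_weight_scale c x y :
  sombor_weight (c * x) (c * y) = c%:R * sombor_weight x y.
Proof.
rewrite /sombor_weight !natrM !exprMn -mulrDr sqrtrM ?exprn_ge0 ?ler0n //.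
by rewrite sqrtr_sqr ger0_norm ?ler0n.
Qed.

Lemma sombor_weight22 : sombor_weight 2 2 = 2 * Num.sqrt 2.
Proof. by rewrite (sombor_weight_scale 2 1 1) /sombor_weight expr1n. Qed.

Lemma sombor_weight44 : sombor_weight 4 4 = 4 * Num.sqrt 2.
Proof. by rewrite (sombor_weight_scale 4 1 1) /sombor_weight expr1n. Qed.

Lemma sombor_weight24 : sombor_weight 2 4 = 2 * Num.sqrt 5.
Proof.
rewrite (sombor_weight_scale 2 1 2) /sombor_weight expr1n.
by congr (_ * Num.sqrt _); ring.
Qed.

End SomborWeight.

Section SpiroChain.

Variables (p k : nat).
Hypothesis p_gt1 : 1 < p.

Let p_gt0 : 0 < p. Proof. exact: ltnW. Qed.

Lemma spiro_nE : spiro_n p.+1 k = (k * p).+1.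
Proof. by rewrite /spiro_n subn1 addn1. Qed.

Lemma spiro_vertex_le (u : 'I_(spiro_n p.+1 k)) : u <= k * p.
Proof. by rewrite -ltnS -spiro_nE. Qed.

Lemma spiro_stepE (u v : 'I_(spiro_n p.+1 k)) :
  [exists i : 'I_k, exists j1 : 'I_p.+1, exists j2 : 'I_p.+1,
     [&& val j2 == j1.+1 %% p.+1, val u == i * p + j1 & val v == i * p + j2]]
  = chain_step p u v.
Proof.
have u_le := spiro_vertex_le u; have v_le := spiro_vertex_le v.
apply/idP/idP.
- case/existsP=> i /existsP[j1 /existsP[j2 /and3P[/eqP j2E /eqP -> /eqP ->]]].
  have := ltn_ord j1; rewrite ltnS leq_eqVlt => /orP[/eqP j1E | lt_j1p].
  + rewrite j1E modnn in j2E.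
    by rewrite /chain_step j2E addn0 dvdn_mull // j1E eqxx orbT.
  + by rewrite modn_small // in j2E; rewrite /chain_step j2E addnS eqxx.
- case/orP=> [/eqP vE | /andP[/dvdnP[i vE] /eqP uE]].
  + have lt_uk : u %/ p < k by rewrite ltn_divLR //; lia.
    have lt_j1 : u %% p < p.+1 by rewrite ltnS ltnW // ltn_pmod.
    have lt_j2 : (u %% p).+1 < p.+1 by rewrite ltnS ltn_pmod.
    apply/existsP; exists (Ordinal lt_uk); apply/existsP; exists (Ordinal lt_j1).
    apply/existsP; exists (Ordinal lt_j2).
    by rewrite /= (modn_small lt_j2) addnS -!divn_eq vE !eqxx.
  + have lt_ik : i < k by rewrite -(ltn_pmul2r p_gt0); lia.
    apply/existsP; exists (Ordinal lt_ik); apply/existsP; exists ord_max.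
    apply/existsP; exists ord0.
    by rewrite /= modnn uE vE addn0 !eqxx.
Qed.

Lemma spiro_adjE (u v : 'I_(spiro_n p.+1 k)) :
  spiro_adj p.+1 k u v = chain_adj p u v.
Proof.
rewrite /chain_adj -!spiro_stepE /spiro_adj /cyc_adj subn1 /=.
apply/idP/orP.
- case/existsP=> i /existsP[j1 /existsP[j2 /and3P[/orP[] j2E uE vE]]].
  + by left; apply/existsP; exists i; apply/existsP; exists j1;
      apply/existsP; exists j2; rewrite j2E uE vE.
  + by right; apply/existsP; exists i; apply/existsP; exists j2;
      apply/existsP; exists j1; rewrite j2E uE vE.
- case=> /existsP[i /existsP[j1 /existsP[j2 /and3P[j2E uE vE]]]].
  + by apply/existsP; exists i; apply/existsP; exists j1;
      apply/existsP; exists j2; rewrite j2E uE vE.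
  + by apply/existsP; exists i; apply/existsP; exists j2;
      apply/existsP; exists j1; rewrite j2E uE vE orbT.
Qed.

Lemma chain_adj_nat a b :
  chain_adj p a b = (b == a.+1) + (p %| b) && (a == b + p)
                    + (a == b.+1) + (p %| a) && (b == a + p) :> nat.
Proof.
rewrite /chain_adj /chain_step.
by case: (p %| a); case: (p %| b); do 4 (case: eqP => ?); simpl; lia.
Qed.

Lemma deg_spiro (k_gt0 : 0 < k) (u : 'I_(spiro_n p.+1 k)) :
  deg (spiro_adj p.+1 k) u = spiro_deg p k u.
Proof.
have u_le := spiro_vertex_le u.
have predE v : (u == v.+1 :> nat) = (0 < u) && (v == u.-1).
  by case: eqP; case: eqP; lia.
have closingE v :
    (p %| v) && (u == v + p :> nat) = (p %| u) && (p <= u) && (v == u - p).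
  case: (v =P u - p) => [-> | ne]; last by case: eqP; [lia | rewrite !andbF].
  case: (leqP p u) => [le_pu | lt_up].
    by rewrite subnK // eqxx dvdn_subl ?andbT.
  by rewrite andbF andbC; case: eqP => //; lia.
rewrite /deg -sum1dep_card big_mkcond /=.
rewrite (eq_bigr (fun v : 'I__ => nat_of_bool (chain_adj p u v))) => [|v _];
  last by rewrite spiro_adjE.
under eq_bigr => v _ do rewrite chain_adj_nat predE closingE.
rewrite !big_split /= (sum_nat_and_eq _ _ true) !sum_nat_and_eq.
clear predE closingE; move: (nat_of_ord u) u_le => {}u u_le.
rewrite spiro_nE !ltnS (leq_trans (leq_subr p u) u_le).
rewrite (leq_trans (leq_pred u) u_le) !andbT /spiro_deg.
case: (boolP (p %| u)) => [/dvdnP[i uE] | ndvd].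
- move: u_le; rewrite uE ltn_pmul2r // muln_gt0 p_gt0 andbT leq_pmul2r //.
  rewrite -mulSnr leq_pmul2r // -{1}(mul1n p) leq_pmul2r //= => le_ik.
  by case: (ltnP 0 i); case: (ltnP i k) => //=; lia.
- have u_gt0 : 0 < u by rewrite lt0n; apply: contraNneq ndvd => ->; apply: dvdn0.
  have lt_u : u < k * p.
    rewrite ltn_neqAle u_le andbT.
    by apply: contraNneq ndvd => ->; apply: dvdn_mull.
  by rewrite u_gt0 lt_u.
Qed.

Lemma spiro_deg0 : spiro_deg p k 0 = 2.
Proof. by rewrite /spiro_deg ltnn andbF. Qed.

Lemma spiro_deg_last : spiro_deg p k (k * p) = 2.
Proof. by rewrite /spiro_deg ltnn !andbF. Qed.

Lemma spiro_deg_cut i : 0 < i < k -> spiro_deg p k (i * p) = 4.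
Proof.
by rewrite /spiro_deg dvdn_mull // muln_gt0 p_gt0 andbT ltn_pmul2r // => ->.
Qed.

Lemma spiro_deg_between i a : i * p < a < i * p + p -> spiro_deg p k a = 2.
Proof.
by move/(ndvdn_between_multiples _ _ _ p_gt0)/negbTE; rewrite /spiro_deg => ->.
Qed.

Lemma ltn_chain_adj a b :
  (a < b) && chain_adj p a b = (b == a.+1) || (p %| a) && (b == a + p).
Proof.
rewrite /chain_adj /chain_step.
case: (p %| a); case: (p %| b).
all: by do 4 (case: eqP => ?); case: ltnP => ?; simpl; lia.
Qed.

Variable R : rcfType.
Local Open Scope ring_scope.
Local Notation d := (spiro_deg p k).
Local Notation W := (sombor_weight R).

Lemma sum_upper_neighbours (u : 'I_(spiro_n p.+1 k)) (F : nat -> R) :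
  \sum_(v < spiro_n p.+1 k | (u < v)%N && spiro_adj p.+1 k u v) F v =
    (if (u.+1 < spiro_n p.+1 k)%N then F u.+1 else 0)
    + (if (u + p < spiro_n p.+1 k)%N && (p %| u)%N then F (u + p)%N else 0).
Proof.
rewrite (eq_bigl (fun v : 'I__ =>
    (v == u.+1 :> nat) || (p %| u)%N && (v == u + p :> nat)%N)) => [|v];
  last by rewrite spiro_adjE ltn_chain_adj.
rewrite (bigID (fun v : 'I__ => v == u.+1 :> nat)) /=; congr (_ + _).
  rewrite (eq_bigl (fun v : 'I__ => v == u.+1 :> nat)) ?big_ord1_eq // => v.
  by case: (_ == _ :> nat); rewrite /= ?andbF.
rewrite (eq_bigl (fun v : 'I__ => (p %| u)%N && (v == u + p :> nat)%N))
  ?(big_ord1_cond_eq _ F (fun=> p %| u)%N) // => v.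
case: eqP => [-> | _] /=; last by rewrite andbT.
have -> : (u.+1 == u + p)%N = false by apply/negbTE/eqP; lia.
by rewrite andbF.
Qed.

Lemma sombor_spiroE (k_gt0 : (0 < k)%N) :
  sombor R (spiro_adj p.+1 k) =
  \sum_(0 <= a < k * p)
     (W (d a) (d a.+1) + (if (p %| a)%N then W (d a) (d (a + p)%N) else 0)).
Proof.
have closing_le a : (p %| a)%N -> (a < k * p)%N -> (a + p <= k * p)%N.
  by case/dvdnP=> i ->; rewrite -mulSnr leq_pmul2r // ltn_pmul2r.
rewrite /sombor big_mkord.
transitivity (\sum_(u < spiro_n p.+1 k)
  \sum_(v < spiro_n p.+1 k | (u < v)%N && spiro_adj p.+1 k u v) W (d u) (d v)).
  by apply: eq_bigr => u _; apply: eq_bigr => v _; rewrite !deg_spiro.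
under eq_bigr => u _ do rewrite (sum_upper_neighbours u (fun v => W (d u) (d v))).
rewrite spiro_nE big_ord_recr /= ltnn.
have -> : (k * p + p < (k * p).+1)%N = false by apply/negbTE; lia.
rewrite /= add0r addr0; apply: eq_bigr => a _.
rewrite ltnS ltn_ord.
case: (boolP (p %| a)%N) => [dvd_pa | _]; last by rewrite andbF.
by rewrite ltnS closing_le ?ltn_ord.
Qed.

Lemma sum_spiro_block i :
  \sum_(i * p <= a < i.+1 * p)
     (W (d a) (d a.+1) + (if (p %| a)%N then W (d a) (d (a + p)%N) else 0))
  = W (d (i * p)) 2 + W 2 (d (i.+1 * p)) + W (d (i * p)) (d (i.+1 * p))
    + W 2 2 *+ (p - 2).
Proof.
have inner_ndvd a : (i * p < a < i * p + p)%N -> (p %| a)%N = false.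
  by move/(ndvdn_between_multiples _ _ _ p_gt0)/negbTE.
rewrite mulSnr big_ltn; last lia.
have -> : (i * p + p = (i * p + p.-1).+1)%N by lia.
rewrite big_nat_recr /=; last lia.
rewrite (eq_big_nat _ _ (F2 := fun=> W 2 2)) => [|a /andP[lo hi]]; last first.
  by rewrite inner_ndvd ?addr0 ?(spiro_deg_between i) //; lia.
have -> : ((i * p + p.-1).+1 = i * p + p)%N by lia.
rewrite sumr_const_nat dvdn_mull // inner_ndvd ?addr0; last lia.
rewrite (spiro_deg_between i (i * p).+1) ?(spiro_deg_between i (i * p + p.-1));
  try lia.
have -> : (i * p + p.-1 - (i * p).+1 = p - 2)%N by lia.
by ring.
Qed.

End SpiroChain.

Local Open Scope ring_scope.

Lemma sombor_spiro_closed (R : rcfType) (p k : nat) :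
  (1 < p)%N -> (1 < k)%N ->
  sombor R (spiro_adj p.+1 k) =
    (2 * p%:R * k%:R - 4) * Num.sqrt 2 + 4 * k%:R * Num.sqrt 5.
Proof.
move=> p_gt1; case: k => [|[|l]] // _.
rewrite sombor_spiroE // big_nat_mul.
under eq_big_nat => i _ do rewrite sum_spiro_block //.
rewrite big_nat_recl // big_nat_recr //=.
rewrite (eq_big_nat _ _ (F2 := fun=> sombor_weight R 4 2 + sombor_weight R 2 4
    + sombor_weight R 4 4 + sombor_weight R 2 2 *+ (p - 2)))
  => [|i /andP[_ lt_il]]; last by rewrite !spiro_deg_cut //; lia.
rewrite mul0n spiro_deg0 spiro_deg_last sumr_const_nat subn0.
rewrite !spiro_deg_cut ?ltnSn //.
rewrite (sombor_weightC R 4 2) sombor_weight22 sombor_weight24 sombor_weight44.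
by rewrite -[_ *+ (p - 2)]mulr_natr natrB //; ring.
Qed.

Theorem mainTheorem8 (R : rcfType) (q k : nat) (hq : (3 <= q)%N) (hk : (2 <= k)%N) :
  sombor R (spiro_adj q k) =
    (2 * q%:R * k%:R - 2 * k%:R - 4) * Num.sqrt (2 : R)
    + 4 * k%:R * Num.sqrt (5 : R).
Proof.
have [p qE] : exists p, q = p.+1 by exists q.-1; lia.
rewrite qE in hq *; rewrite sombor_spiro_closed //.
by rewrite -addn1 natrD; ring.
Qed.
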